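(* Let $A\in\mathcal{C}_n$, let $u$ be a zero of $A$ with $\operatorname{Supp}(u)=I$, $|I|=k$, and let $K=\mathbb{R}^k_+\cap\ker A_I$. Let $v\in\mathbb{R}^n$ be a nonzero vector with $\operatorname{Supp}(v)\subset I$. Then $v$ is a minimal zero of $A$ if and only if $v_I$ is an extremal element of the cone $K$ (i.e., whenever $v_I=x+y$ with $x,y\in K$, both $x,y$ are nonnegative multiples of $v_I$).
   Context: $\mathcal{C}_n$ denotes the cone of copositive matrices: real symmetric $n\times n$ matrices $A$ with $x^TAx\ge 0$ for all $x\in\mathbb{R}^n_+$. A zero of $A$ is a nonzero $u\in\mathbb{R}^n_+$ with $u^TAu=0$; $\operatorname{Supp}(u)=\{i:u_i\ne0\}$; a zero $u$ is minimal if there is no zero $v$ with $\operatorname{Supp}(v)\subsetneq\operatorname{Supp}(u)$. For $I\subset\{1,\dots,n\}$, $A_I=(A_{ij})_{i,j\in I}$ and $v_I=(v_i)_{i\in I}$. *)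

From HB Require Import structures.
From mathcomp Require Import all_boot all_order all_algebra.
Set Implicit Arguments. Unset Strict Implicit. Unset Printing Implicit Defensive.
Import Order.TTheory GRing.Theory Num.Theory.
Local Open Scope ring_scope.

Section CopositiveDefs.
Variable R : realFieldType.

Definition nonneg_vec (n : nat) (x : 'cV[R]_n) : Prop := forall i, 0 <= x i 0.

Definition qform (n : nat) (A : 'M[R]_n) (x : 'cV[R]_n) : R := (x^T *m A *m x) 0 0.

Definition copositive (n : nat) (A : 'M[R]_n) : Prop :=
  A^T = A /\ forall x : 'cV[R]_n, nonneg_vec x -> 0 <= qform A x.

Definition supp (n : nat) (x : 'cV[R]_n) : {set 'I_n} := [set i | x i 0 != 0].

Definition is_zero (n : nat) (A : 'M[R]_n) (u : 'cV[R]_n) : Prop :=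
  nonneg_vec u /\ u != 0 /\ qform A u = 0.

Definition minimal_zero (n : nat) (A : 'M[R]_n) (u : 'cV[R]_n) : Prop :=
  is_zero A u /\ ~ (exists v : 'cV[R]_n, is_zero A v /\ supp v \proper supp u).

(* principal submatrix A_I and subvector v_I, indices of I in increasing order
   via enum_val : 'I_#|I| -> 'I_n *)
Definition submx_I (n : nat) (I : {set 'I_n}) (A : 'M[R]_n) : 'M[R]_#|I| :=
  \matrix_(i, j) A (enum_val i) (enum_val j).
Definition subvec_I (n : nat) (I : {set 'I_n}) (v : 'cV[R]_n) : 'cV[R]_#|I| :=
  \col_i v (enum_val i) 0.

Definition inK (n : nat) (A : 'M[R]_n) (I : {set 'I_n}) (x : 'cV[R]_#|I|) : Prop :=
  nonneg_vec x /\ submx_I I A *m x = 0.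

Definition extremal (k : nat) (K : 'cV[R]_k -> Prop) (x : 'cV[R]_k) : Prop :=
  K x /\ forall y z : 'cV[R]_k, K y -> K z -> x = y + z ->
    (exists a : R, 0 <= a /\ y = a *: x) /\ (exists b : R, 0 <= b /\ z = b *: x).

End CopositiveDefs.

Arguments inK {R n} A I x.
Arguments subvec_I {R n} I v.
Arguments submx_I {R n} I A.

(* The proof has three independent ingredients.
   - Restriction to I: vectors of R^n supported in I correspond bijectively to
     vectors of R^I (by [subvec_I I] and extension by zero), preserving
     supports, strict inclusion of supports and the action of A on I.
   - Copositivity: a zero x of a copositive A minimizes x^T A x on R^n_+, so
     A x >= 0; pairing with the zero u then forces A x = 0 on Supp(u) whenever
     Supp(x) ⊆ Supp(u).  Conversely A x = 0 on I gives x^T A x = 0.  Hence the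
     zeros supported in I are the nonzero x with x_I ∈ K.
   - Polyhedral cones: in R^k_+ ∩ ker M the extremal elements are exactly the
     elements of minimal support, by the ratio test x - t y of the simplex
     method.
   The theorem follows by transporting minimality of supports through I. *)
From HB Require Import structures.
From mathcomp Require Import all_boot all_order all_algebra.
From mathcomp Require Import lra.
Import Order.TTheory GRing.Theory Num.Theory.
Set Implicit Arguments. Unset Strict Implicit. Unset Printing Implicit Defensive.
Local Open Scope ring_scope.

Lemma imset_inj_subset (aT rT : finType) (f : aT -> rT) (A B : {set aT}) :
  injective f -> (f @: A \subset f @: B) = (A \subset B).
Proof.
move=> injf; apply/idP/idP; last exact: imsetS.
move/subsetP=> sfAB; apply/subsetP=> a Aa.
by rewrite -(mem_imset _ _ injf) sfAB ?imset_f.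
Qed.

Lemma imset_inj_proper (aT rT : finType) (f : aT -> rT) (A B : {set aT}) :
  injective f -> (f @: A \proper f @: B) = (A \proper B).
Proof. by move=> injf; rewrite !properE !imset_inj_subset. Qed.

Section Support.
Variables (R : realFieldType) (n : nat).
Implicit Types x : 'cV[R]_n.

Lemma supp_eq0 x : (supp x == set0) = (x == 0).
Proof.
apply/eqP/eqP=> [supp0|->]; last by apply/setP=> i; rewrite !inE mxE eqxx.
apply/matrixP=> i j; rewrite (ord1 j) mxE.
by move: (in_set0 i); rewrite -supp0 inE => /negbFE/eqP.
Qed.

Lemma supp_out (I : {set 'I_n}) x j : supp x \subset I -> j \notin I -> x j 0 = 0.
Proof.
move=> sxI; apply: contraNeq => xj; apply: (subsetP sxI); by rewrite inE.
Qed.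

Lemma nonneg_pos_coord x : nonneg_vec x -> x != 0 -> exists j, 0 < x j 0.
Proof.
move=> x_ge0; rewrite -supp_eq0 => /set0Pn[j]; rewrite inE => xj.
by exists j; rewrite lt_def xj x_ge0.
Qed.

End Support.

Section Restriction.
Variables (R : realFieldType) (n : nat) (I : {set 'I_n}).
Implicit Types x y : 'cV[R]_n.

(* The extension by zero of a vector of R^I, left inverse of [subvec_I I]. *)
Definition extend_I (y : 'cV[R]_#|I|) : 'cV[R]_n :=
  \col_j \sum_(i | enum_val i == j) y i 0.

Lemma subvec_extend (y : 'cV[R]_#|I|) : subvec_I I (extend_I y) = y.
Proof.
apply/matrixP=> k l; rewrite !mxE (ord1 l) (big_pred1 k) // => i.
by rewrite (inj_eq enum_val_inj).
Qed.

Lemma supp_extend (y : 'cV[R]_#|I|) : supp (extend_I y) \subset I.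
Proof.
apply/subsetP=> j; rewrite inE mxE; apply: contraR => jNI.
rewrite big1 // => i /eqP vi_j.
by move: (enum_valP i); rewrite vi_j (negbTE jNI).
Qed.

Lemma supp_subvec x : supp x \subset I -> supp x = enum_val @: supp (subvec_I I x).
Proof.
move=> sxI; apply/setP=> j; apply/idP/imsetP=> [xj | [i]]; last first.
  by rewrite inE mxE => xi ->; rewrite inE.
have jI : j \in I by exact: (subsetP sxI).
exists (enum_rank_in jI j); last by rewrite enum_rankK_in.
by move: xj; rewrite !inE mxE enum_rankK_in.
Qed.

Lemma subvec_eq0 x : supp x \subset I -> (subvec_I I x == 0) = (x == 0).
Proof.
by move=> sxI; rewrite -supp_eq0 -(supp_eq0 x) (supp_subvec sxI) imset_eq0.
Qed.

Lemma subvec_proper x y : supp x \subset I -> supp y \subset I ->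
  (supp (subvec_I I x) \proper supp (subvec_I I y)) = (supp x \proper supp y).
Proof.
move=> sxI syI; rewrite (supp_subvec sxI) (supp_subvec syI).
by rewrite imset_inj_proper //; exact: enum_val_inj.
Qed.

Lemma submx_mul (A : 'M[R]_n) x i : supp x \subset I ->
  (submx_I I A *m subvec_I I x) i 0 = (A *m x) (enum_val i) 0.
Proof.
move=> sxI; rewrite !mxE (bigID (mem I)) /= [X in _ = _ + X]big1 ?addr0.
  by rewrite [RHS]big_enum_val; apply: eq_bigr => k _; rewrite !mxE.
by move=> j jNI; rewrite (supp_out sxI jNI) mulr0.
Qed.

Lemma inK_subvec (A : 'M[R]_n) x : supp x \subset I ->
  inK A I (subvec_I I x) <-> nonneg_vec x /\ (forall i, i \in I -> (A *m x) i 0 = 0).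
Proof.
move=> sxI; split=> [[x_ge0 Ax0] | [x_ge0 Ax0]]; split.
- move=> j; have [jI | jNI] := boolP (j \in I); last by rewrite (supp_out sxI jNI).
  by have := x_ge0 (enum_rank_in jI j); rewrite mxE enum_rankK_in.
- by move=> i iI; rewrite -(enum_rankK_in iI iI) -submx_mul // Ax0 mxE.
- by move=> j; rewrite mxE; exact: x_ge0.
- by apply/matrixP=> i l; rewrite (ord1 l) submx_mul // Ax0 ?mxE ?enum_valP.
Qed.

End Restriction.

(* If 2 t a + t^2 c >= 0 for every t > 0, then a >= 0:
   the linear term dominates for small t. *)
Lemma linear_coef_ge0 (R : realFieldType) (a c : R) :
  (forall t, 0 < t -> 0 <= 2 * t * a + t ^+ 2 * c) -> 0 <= a.
Proof.
move=> quad_ge0; rewrite leNgt; apply/negP => a_lt0.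
have [c_le0 | c_gt0] := lerP c 0; first by have := quad_ge0 1 ltr01; lra.
have t_gt0 : 0 < - a / c by rewrite divr_gt0 // oppr_gt0.
have tc : - a / c * c = - a by rewrite divfK // gt_eqF.
by have := quad_ge0 _ t_gt0; rewrite expr2; nra.
Qed.

Lemma orthogonal_nonneg (R : realFieldType) (n : nat) (p q : 'cV[R]_n) i :
  nonneg_vec p -> nonneg_vec q -> \sum_j p j 0 * q j 0 = 0 ->
  i \in supp p -> q i 0 = 0.
Proof.
move=> p_ge0 q_ge0 pq0; rewrite inE => pi0.
have pq_ge0 j : true -> 0 <= p j 0 * q j 0 by move=> _; rewrite mulr_ge0.
move: (psumr_eq0P pq_ge0 pq0 (i := i) isT) => /eqP.
by rewrite mulf_eq0 (negbTE pi0) => /eqP.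
Qed.

Section Copositive.
Variables (R : realFieldType) (n : nat) (A : 'M[R]_n).
Implicit Types x y u : 'cV[R]_n.

Definition bform x y : R := (x^T *m A *m y) 0 0.

Lemma bform_sum x y : bform x y = \sum_i x i 0 * (A *m y) i 0.
Proof. by rewrite /bform -mulmxA mxE; apply: eq_bigr => i _; rewrite mxE. Qed.

Lemma bformC x y : A^T = A -> bform x y = bform y x.
Proof.
move=> symA; have tr_scalar (M : 'M[R]_1) : M 0 0 = M^T 0 0 by rewrite mxE.
by rewrite /bform [LHS]tr_scalar !trmx_mul trmxK symA mulmxA.
Qed.

Lemma bformDZl x1 x2 a y : bform (x1 + a *: x2) y = bform x1 y + a * bform x2 y.
Proof.
rewrite !bform_sum mulr_sumr -big_split; apply: eq_bigr => i _.
by rewrite !mxE mulrDl mulrA.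
Qed.

Lemma bform_kernel (I : {set 'I_n}) x y : supp x \subset I ->
  (forall i, i \in I -> (A *m y) i 0 = 0) -> bform x y = 0.
Proof.
move=> sxI Ax0; rewrite bform_sum big1 // => i _.
have [iI | iNI] := boolP (i \in I); first by rewrite Ax0 ?mulr0.
by rewrite (supp_out sxI iNI) mul0r.
Qed.

Hypothesis copA : copositive A.

(* First-order optimality: a zero x of a copositive A minimizes the quadratic
   form on R^n_+, so the gradient A x is nonnegative. *)
Lemma zero_grad_ge0 x : nonneg_vec x -> qform A x = 0 -> nonneg_vec (A *m x).
Proof.
case: copA => symA A_ge0 x_ge0 qx0 i.
pose e : 'cV[R]_n := delta_mx i 0.
have bex : bform e x = (A *m x) i 0.
  rewrite bform_sum (bigD1 i) //= big1 ?addr0 => [|j ji].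
    by rewrite mxE !eqxx mul1r.
  by rewrite mxE (negbTE ji) mul0r.
apply: (@linear_coef_ge0 _ _ (bform e e)) => t t_gt0.
have xte_ge0 : nonneg_vec (x + t *: e).
  by move=> j; rewrite !mxE addr_ge0 // mulr_ge0 ?ler0n ?ltW.
have := A_ge0 _ xte_ge0; rewrite [qform _ _]bformDZl.
rewrite (bformC x _ symA) (bformC e _ symA) !bformDZl [bform x x]qx0.
rewrite (bformC x e symA) bex => q_ge0.
by rewrite expr2; lra.
Qed.

Lemma zero_kernel u x : nonneg_vec u -> qform A u = 0 ->
  nonneg_vec x -> qform A x = 0 -> supp x \subset supp u ->
  forall i, i \in supp u -> (A *m x) i 0 = 0.
Proof.
move=> u_ge0 qu0 x_ge0 qx0 sxu.
have Au0 i : i \in supp u -> (A *m u) i 0 = 0.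
  by apply: orthogonal_nonneg u_ge0 (zero_grad_ge0 u_ge0 qu0) _; rewrite -bform_sum.
move=> i; apply: orthogonal_nonneg u_ge0 (zero_grad_ge0 x_ge0 qx0) _.
by rewrite -bform_sum bformC ?copA.1 // (bform_kernel sxu).
Qed.

End Copositive.

Section PolyhedralCone.
Variables (R : realFieldType) (m k : nat) (M : 'M[R]_(m, k)).
Implicit Types x y z w : 'cV[R]_k.

Definition polycone x : Prop := nonneg_vec x /\ M *m x = 0.

Definition minimal_support x : Prop :=
  polycone x /\ ~ exists w, [/\ polycone w, w != 0 & supp w \proper supp x].

(* Ratio test: subtract from p the largest multiple t q of q keeping p - t q
   nonnegative; some coordinate j in the support of q then vanishes. *)
Lemma ratio_test (p q : 'cV[R]_k) : nonneg_vec p -> nonneg_vec q -> q != 0 ->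
  exists j t, [/\ 0 < q j 0, p j 0 = t * q j 0 & nonneg_vec (p - t *: q)].
Proof.
move=> p_ge0 q_ge0 /(nonneg_pos_coord q_ge0)[j0 qj0_gt0].
have [j qj_gt0 j_min] :=
  @arg_minP _ _ _ j0 (fun j => 0 < q j 0) (fun j => p j 0 / q j 0) qj0_gt0.
exists j, (p j 0 / q j 0); split; rewrite ?divfK ?gt_eqF // => i.
rewrite !mxE; have [qi_gt0 | qi_le0] := ltrP 0 (q i 0); last first.
  by rewrite (@le_anti _ _ (q i 0) 0) ?qi_le0 ?q_ge0 // mulr0 subr0.
rewrite -[p i 0](@divfK _ (q i 0)) ?gt_eqF // -mulrBl.
by rewrite mulr_ge0 ?subr_ge0 ?j_min // ltW.
Qed.

Lemma polycone_sub x y t : polycone x -> polycone y -> nonneg_vec (x - t *: y) ->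
  polycone (x - t *: y).
Proof.
move=> [_ Mx0] [_ My0] xty_ge0.
by rewrite /polycone mulmxBr -scalemxAr Mx0 My0 scaler0 subr0.
Qed.

Lemma minimal_summand x y z : minimal_support x -> polycone y -> polycone z ->
  x = y + z -> exists a, 0 <= a /\ y = a *: x.
Proof.
move=> [Kx no_smaller] Ky Kz def_x.
have [-> | y_neq0] := eqVneq y 0; first by exists 0; rewrite scale0r lexx.
have y_le_x i : y i 0 <= x i 0 by rewrite def_x mxE lerDl Kz.1.
have [j [t [yj_gt0 xj_eq xty_ge0]]] := ratio_test Kx.1 Ky.1 y_neq0.
have t_gt0 : 0 < t by have := y_le_x j; rewrite xj_eq; nra.
have [xty0 | xty_neq0] := eqVneq (x - t *: y) 0.
  exists t^-1; rewrite invr_ge0 ltW //; split => //.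
  by move/eqP: xty0; rewrite subr_eq0 => /eqP->; rewrite scalerA mulVf ?scale1r ?gt_eqF.
exfalso; apply: no_smaller; exists (x - t *: y); split => //.
  exact: polycone_sub.
rewrite properE; apply/andP; split.
  apply/subsetP => i; rewrite !inE !mxE; apply: contraNneq => xi0.
  have yi0 : y i 0 = 0.
    by apply/le_anti; rewrite Ky.1 andbT -xi0 y_le_x.
  by rewrite xi0 yi0 mulr0 subr0.
apply/subsetPn; exists j; first by rewrite inE xj_eq mulf_neq0 ?gt_eqF.
by rewrite inE !mxE xj_eq subrr eqxx.
Qed.

Lemma extremal_minimal_support x : extremal polycone x <-> minimal_support x.
Proof.
split=> [[Kx x_ext] | x_min]; last first.
  split; first exact: x_min.1.
  move=> y z Ky Kz def_x; split; first exact: minimal_summand x_min Ky Kz def_x.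
  by apply: (minimal_summand x_min Kz Ky); rewrite def_x addrC.
split=> // -[w [Kw w_neq0 w_lt_x]].
have [j [t [wj_gt0 xj_eq xtw_ge0]]] := ratio_test Kx.1 Kw.1 w_neq0.
have xj_neq0 : x j 0 != 0.
  by have := subsetP (proper_sub w_lt_x) j; rewrite !inE gt_eqF //; apply.
have t_ge0 : 0 <= t by have := Kx.1 j; rewrite xj_eq; nra.
have Ktw : polycone (t *: w).
  split; first by move=> i; rewrite mxE mulr_ge0 ?Kw.1.
  by rewrite -scalemxAr Kw.2 scaler0.
have [_ [b [_ def_r]]] := x_ext _ _ Ktw (polycone_sub Kx Kw xtw_ge0) (esym (subrKC _ _)).
have b0 : b = 0.
  move/(congr1 (fun v : 'cV[R]_k => v j 0)): def_r.
  rewrite !mxE -xj_eq subrr => /esym/eqP; rewrite mulf_eq0 (negbTE xj_neq0) orbF.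
  by move/eqP.
have def_x : x = t *: w by apply/eqP; rewrite -subr_eq0 def_r b0 scale0r.
move: w_lt_x; rewrite properE def_x => /andP[_ /negP]; apply.
by apply/subsetP => i; rewrite !inE !mxE; apply: contra => /eqP->; rewrite mulr0.
Qed.

End PolyhedralCone.

Lemma zero_supported_iff (R : realFieldType) (n : nat) (A : 'M[R]_n)
    (u : 'cV[R]_n) (I : {set 'I_n}) (x : 'cV[R]_n) :
  copositive A -> is_zero A u -> supp u = I -> supp x \subset I ->
  is_zero A x <-> inK A I (subvec_I I x) /\ subvec_I I x != 0.
Proof.
move=> copA [u_ge0 [_ qu0]] supp_u sxI; rewrite subvec_eq0 //.
split=> [[x_ge0 [x_neq0 qx0]] | [/(inK_subvec A sxI)[x_ge0 Ax0] x_neq0]].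
  split=> //; apply/(inK_subvec A sxI); split=> //; rewrite -supp_u.
  by apply: zero_kernel; rewrite ?supp_u.
by split=> //; split=> //; exact: bform_kernel sxI Ax0.
Qed.

Theorem lemma3p4 (R : realFieldType) (n : nat) (A : 'M[R]_n) (u : 'cV[R]_n)
    (I : {set 'I_n}) (v : 'cV[R]_n) :
  copositive A -> is_zero A u -> supp u = I ->
  v != 0 -> supp v \subset I ->
  (minimal_zero A v <-> extremal (inK A I) (subvec_I I v)).
Proof.
move=> copA zero_u supp_u v_neq0 sv.
have zeroP := zero_supported_iff copA zero_u supp_u.
split=> [[zero_v no_smaller] | /extremal_minimal_support[Kv no_smaller]].
  apply/extremal_minimal_support; split; first by case: (zeroP v sv).1.
  case=> y [Ky y_neq0 y_lt_v]; apply: no_smaller; exists (extend_I y).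
  split; first by apply/(zeroP _ (supp_extend y)); rewrite subvec_extend.
  by rewrite -(subvec_proper (supp_extend y) sv) subvec_extend.
split; first by apply/(zeroP v sv); rewrite subvec_eq0.
case=> w [zero_w w_lt_v]; have sw := subset_trans (proper_sub w_lt_v) sv.
have [Kw w_neq0] := (zeroP w sw).1 zero_w.
by apply: no_smaller; exists (subvec_I I w); rewrite (subvec_proper sw sv).
Qed.
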